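(* Let $X$ be a finite set of proposals. Every profile-index-based DSF $\Delta_\delta$ induced by a neutral profile index function $\delta$ satisfies Clone Consistency: for every profile $R$ and proposals $x,x',y$ such that $x$ and $x'$ are clones in $R$ but $x$ and $y$ are not clones in $R$, if $\{x,y\}\subseteq\Delta_\delta(R)$ then $\{x,x',y\}\subseteq\Delta_\delta(R)$.
   Context: $X!$ is the set of strict linear orders on $X$; a profile is a function $R:N\to X!$ with $N\subset\mathbb{N}$ finite and nonempty. A profile index function is a function $\delta$ from the set of all profiles to $\mathbb{R}$; it is neutral if $\delta(R)=\delta(\sigma(R))$ for every permutation $\sigma:X\to X$ (applied to rename proposals in every ranking). For a proposal $x$, $R^{\hat{x}}$ is the profile obtained from $R$ by moving $x$ to the top of every agent's ranking (leaving the relative order of the other proposals unchanged). The profile-index-based DSF is $\Delta_\delta(R)=\arg\min_{x\in X}\delta(R^{\hat{x}})$. Two proposals are clones in $R$ if they appear adjacent to one another in every agent's ranking in $R$. *)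

From HB Require Import structures.
From mathcomp Require Import all_boot all_fingroup.
From mathcomp.finmap Require Import finmap.
From Stdlib Require Import Reals.

Set Implicit Arguments.
Unset Strict Implicit.
Unset Printing Implicit Defensive.

Local Open Scope fmap_scope.

Section Defs.
Variable X : finType.

(* X! : strict linear orders on X, encoded as the list of all proposals from
   best (head) to worst, without repetition. *)
Definition is_ranking (s : seq X) : bool := uniq s && (size s == #|X|).

Record ranking := Ranking { rseq :> seq X; rseqP : is_ranking rseq }.

HB.instance Definition _ := [isSub for rseq].
HB.instance Definition _ := [Equality of ranking by <:].
HB.instance Definition _ := [Choice of ranking by <:].

(* a profile R : N -> X!, N a finite subset of nat (nonemptiness is required
   separately by [profile_ok]) *)
Definition profile := {fmap nat -> ranking}.
Definition profile_ok (R : profile) : Prop := domf R != fset0.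

Lemma perm_rankingP (sigma : {perm X}) (r : ranking) :
  is_ranking (map sigma r).
Proof.
have /andP [us ss] := rseqP r; apply/andP; split.
  by rewrite map_inj_uniq //; exact: perm_inj.
by rewrite size_map.
Qed.
Definition perm_ranking sigma r := Ranking (perm_rankingP sigma r).
Definition perm_profile (sigma : {perm X}) (R : profile) : profile :=
  [fmap i : domf R => perm_ranking sigma (R i)].

Lemma top_rankingP (x : X) (r : ranking) :
  is_ranking (x :: filter (predC1 x) r).
Proof.
have /andP [us /eqP ss] := rseqP r; set s := rseq r in us ss *; apply/andP; split.
  by rewrite /= filter_uniq // mem_filter /= eqxx.
have xs : x \in s.
  have /subset_cardP : #|s| = #|X| by rewrite (card_uniqP us).
  by move=> /(_ (subset_predT _)) /= e; rewrite -[x \in s]/(x \in mem s) e.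
have c := count_predC (pred1 x) s.
rewrite (count_uniq_mem _ us) xs in c.
by rewrite /= size_filter -ss -c add1n.
Qed.
Definition top_ranking x r := Ranking (top_rankingP x r).
Definition top_profile (x : X) (R : profile) : profile :=
  [fmap i : domf R => top_ranking x (R i)].

Definition neutral (delta : profile -> R) : Prop :=
  forall (sigma : {perm X}) (P : profile), profile_ok P ->
    delta P = delta (perm_profile sigma P).

(* membership in Delta_delta(R) = argmin_x delta(R^x) *)
Definition in_DSF (delta : profile -> R) (P : profile) (x : X) : Prop :=
  forall y : X, Rle (delta (top_profile x P)) (delta (top_profile y P)).

Definition adjacent (r : ranking) (x x' : X) : bool :=
  (index x r == (index x' r).+1) || (index x' r == (index x r).+1).
Definition clones (P : profile) (x x' : X) : Prop :=
  forall i : domf P, adjacent (P i) x x'.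

End Defs.

(* The transposition of two clones x and x' turns every ranking of R^x into
   the corresponding ranking of R^x': in x :: (r without x) it swaps the head
   x with x', which sits exactly where x sat in r.  Neutrality therefore gives
   delta(R^x) = delta(R^x'), so x' minimises delta(R^_) as soon as x does. *)

From HB Require Import structures.
From mathcomp Require Import all_boot all_fingroup.
From mathcomp.finmap Require Import finmap.
From Stdlib Require Import Reals.

Set Implicit Arguments.
Unset Strict Implicit.
Unset Printing Implicit Defensive.

Lemma filter_predC1_cat (T : eqType) (s1 s2 : seq T) (a : T) :
  uniq (s1 ++ a :: s2) -> filter (predC1 a) (s1 ++ a :: s2) = s1 ++ s2.
Proof.
have keep s : a \notin s -> filter (predC1 a) s = s.
  by move=> sa; apply/all_filterP/allP=> z zs; apply: contraNneq sa => <-.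
move=> us; have /andP [+ _] : uniq ([:: a] ++ s1 ++ s2) by rewrite uniq_catCA.
by rewrite mem_cat negb_or filter_cat /= eqxx => /andP [/keep-> /keep->].
Qed.

Lemma map_tperm_cat (T : finType) (s1 s2 : seq T) (x x' : T) :
  x \notin s1 ++ s2 -> x' \notin s1 ++ s2 ->
  map (tperm x x') (s1 ++ x' :: s2) = s1 ++ x :: s2.
Proof.
move=> xs x's; rewrite map_cat /= tpermR.
have fix_out z : z \in s1 ++ s2 -> tperm x x' z = z.
  by move=> zs; rewrite tpermD //; [apply: contraNneq xs | apply: contraNneq x's] => ->.
by rewrite !map_id_in // => z zs; rewrite fix_out // mem_cat zs ?orbT.
Qed.

Section Rankings.
Variable X : finType.
Implicit Types (r : ranking X) (x : X).

Lemma mem_ranking r x : x \in rseq r.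
Proof.
have /andP [ur /eqP sr] := rseqP r.
have /subset_cardP : #|rseq r| = #|X| by rewrite (card_uniqP ur).
by move=> /(_ (subset_predT _)) eqr; rewrite -[x \in _]/(x \in mem (rseq r)) eqr.
Qed.

Lemma adjacent_cat r x x' : index x' r = (index x r).+1 ->
  exists s1 s2, rseq r = s1 ++ x :: x' :: s2.
Proof.
move=> ix'; exists (take (index x r) r), (drop (index x r).+2 r).
have lt_size y : index y r < size r by rewrite index_mem mem_ranking.
rewrite -{1}[rseq r](cat_take_drop (index x r)) (drop_nth x (lt_size x)) -ix'.
by rewrite (drop_nth x (lt_size x')) !nth_index ?mem_ranking.
Qed.

Lemma map_tperm_filter_succ r x x' : index x' r = (index x r).+1 ->
  map (tperm x x') (filter (predC1 x) r) = filter (predC1 x') r.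
Proof.
case/adjacent_cat=> s1 [s2 Er].
have ur : uniq (s1 ++ x :: x' :: s2) by rewrite -Er; case/andP: (rseqP r).
have : uniq ([:: x; x'] ++ s1 ++ s2) by rewrite uniq_catCA.
rewrite /= in_cons negb_or => /and3P [/andP [_ xs] x's _].
rewrite Er -[in RHS]cat_rcons !filter_predC1_cat ?cat_rcons //.
exact: map_tperm_cat.
Qed.

Lemma top_ranking_tperm r x x' : adjacent r x x' ->
  perm_ranking (tperm x x') (top_ranking x r) = top_ranking x' r.
Proof.
move=> adj; apply: val_inj; rewrite /= tpermL; congr (_ :: _).
case/orP: adj => /eqP ix; last exact: map_tperm_filter_succ.
rewrite tpermC -(map_tperm_filter_succ ix) -map_comp -[RHS]map_id.
by apply: eq_map => z /=; rewrite tpermK.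
Qed.

End Rankings.

Section Profiles.
Variable X : finType.
Implicit Types (P : profile X) (x : X).

Lemma top_profile_tperm P x x' : clones P x x' ->
  perm_profile (tperm x x') (top_profile x P) = top_profile x' P.
Proof.
move=> cl; apply: getfP => // k kx kx'; rewrite !ffunE /=.
rewrite (top_ranking_tperm (cl (FSetSub kx))).
by congr top_ranking; exact: eq_getf.
Qed.

Lemma in_DSF_clone (delta : profile X -> R) P x x' :
  neutral delta -> profile_ok P -> clones P x x' ->
  in_DSF delta P x -> in_DSF delta P x'.
Proof.
move=> neu ok cl minx z.
have -> : delta (top_profile x' P) = delta (top_profile x P).
  by rewrite -(top_profile_tperm cl) -neu.
exact: minx.
Qed.

End Profiles.

Theorem proposition4 (X : finType) (delta : profile X -> R) :
  neutral delta ->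
  forall (P : profile X) (x x' y : X),
    profile_ok P ->
    clones P x x' -> ~ clones P x y ->
    in_DSF delta P x -> in_DSF delta P y ->
    in_DSF delta P x /\ in_DSF delta P x' /\ in_DSF delta P y.
Proof.
move=> neu P x x' y ok cl _ minx miny.
split=> //; split=> //; exact: in_DSF_clone neu ok cl minx.
Qed.
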